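(* Let $p=p(n)\in[0,1]$ and let $\ell,c$ be positive integers with $q:=\frac{cp}{\ell}\le 1$. Let $k$ be any positive integer and let $\mathcal C$ be any $\ell$-rich collection of edge-colored $k$-uniform hypergraphs on vertex set $[n]$ with colors from $[c]$. Then $$\Pr\left[H\sim \mathcal H^k(n,p)\text{ contains some } C\in\widetilde{\mathcal C}\right]\le \Pr\left[H\sim\mathcal H^k_c(n,q)\text{ contains some }C\in\mathcal C\right].$$
   Context: $\mathcal H^k(n,p)$ is the binomial random $k$-uniform hypergraph on $[n]$: each $k$-subset of $[n]$ is an edge independently with probability $p$. $\mathcal H^k_c(n,q)$ is obtained by taking $H\sim\mathcal H^k(n,q)$ and assigning each edge a color from $[c]$ uniformly and independently at random. A collection $\mathcal C$ of edge-colored $k$-uniform hypergraphs on vertex set $[n]$ with colors in $[c]$ is called $\ell$-rich if for every $C\in\mathcal C$ and every edge $e\in E(C)$ there are at least $\ell$ distinct colors such that recoloring $e$ with that color (keeping all other edges and colors of $C$) yields an element of $\mathcal C$. $\widetilde{\mathcal C}$ denotes the set of uncolored hypergraphs obtained from members of $\mathcal C$ by forgetting the colors. ''$H$ contains $C$'' for a colored $C$ means $C$ is a subhypergraph of $H$ with the same edge colors. *)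

From HB Require Import structures.
From mathcomp Require Import all_boot all_order all_algebra.
Set Implicit Arguments. Unset Strict Implicit. Unset Printing Implicit Defensive.
Import Order.TTheory GRing.Theory Num.Theory.
Local Open Scope ring_scope.

Definition ksets (n k : nat) : {set {set 'I_n}} := [set e : {set 'I_n} | #|e| == k].

Definition is_khyper (n k : nat) (E : {set {set 'I_n}}) : bool :=
  E \subset ksets n k.

(* An edge-colored hypergraph on [n] with colors in [c]: each possible
   vertex subset e is either a non-edge (None) or an edge with color a
   (Some a). *)
Definition colhyp (n c : nat) := {ffun {set 'I_n} -> option 'I_c}.

Definition is_kcol (n k c : nat) (f : colhyp n c) : bool :=
  [forall e : {set 'I_n}, (f e != None) ==> (e \in ksets n k)].

Definition recolor (n c : nat) (f : colhyp n c) (e : {set 'I_n}) (a : 'I_c)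
  : colhyp n c := [ffun e' => if e' == e then Some a else f e'].

Definition rich (n c : nat) (l : nat) (CC : {set colhyp n c}) : Prop :=
  forall f, f \in CC -> forall e, f e != None ->
    (l <= #|[set a : 'I_c | recolor f e a \in CC]|)%N.

Definition forget (n c : nat) (f : colhyp n c) : {set {set 'I_n}} :=
  [set e : {set 'I_n} | f e != None].

Definition uncolored (n c : nat) (CC : {set colhyp n c}) : {set {set {set 'I_n}}} :=
  [set forget f | f in CC].

Definition contains_col (n c : nat) (F f : colhyp n c) : bool :=
  [forall e : {set 'I_n}, (f e != None) ==> (F e == f e)].

Definition prob_unc (R : realFieldType) (n k : nat) (p : R)
    (A : pred {set {set 'I_n}}) : R :=
  \sum_(E : {set {set 'I_n}} | is_khyper k E && A E)
     p ^+ #|E| * (1 - p) ^+ (#|ksets n k| - #|E|).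

(* Pr[H ~ H^k_c(n,q) satisfies A]: each k-set is an edge with prob. q and
   then gets each color with prob. 1/c, independently. *)
Definition prob_col (R : realFieldType) (n k c : nat) (q : R)
    (A : pred (colhyp n c)) : R :=
  \sum_(F : colhyp n c | is_kcol k F && A F)
     \prod_(e in ksets n k) (if F e is Some _ then q / c%:R else 1 - q).

From HB Require Import structures.
From mathcomp Require Import all_boot all_order all_algebra.
From mathcomp Require Import ring lra.
Import Order.TTheory GRing.Theory Num.Theory.
Local Open Scope ring_scope.

(* Interpolate between the two models one k-set at a time.  For a set S of
   k-sets, the hybrid model samples the k-sets of S as in H^k_c(n,q) and the
   other ones as in H^k(n,p); its event is that some C in CC has each edge
   either present uncolored or present with its color in C.  For S empty this
   is the uncolored event, for S the set of all k-sets the colored one.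
   Moving one k-set e into S cannot decrease the probability: conditionally on
   the other k-sets, if the event holds with e absent it holds whatever e is,
   and if it needs e present uncolored (probability p), then e is an edge of
   some C in CC and richness yields l colors for which the recolored C works,
   which has probability at least l * q/c = p. *)

Lemma sumr_option (V : nmodType) (T : finType) (F : option T -> V) :
  \sum_x F x = F None + \sum_y F (Some y).
Proof.
rewrite (bigD1 None) //=; congr (_ + _).
rewrite (reindex_omap Some id) //=; last by case.
by apply: eq_bigl => y; rewrite eqxx.
Qed.

Section HybridModel.
Set Implicit Arguments. Unset Strict Implicit.

Variables (R : realFieldType) (n : nat) (p : R) (l c k : nat).
Variable CC : {set colhyp n c}.
Hypotheses (p_ge0 : 0 <= p) (p_le1 : p <= 1).
Hypotheses (l_gt0 : (0 < l)%N) (c_gt0 : (0 < c)%N).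
Let q : R := c%:R * p / l%:R.
Hypotheses (q_le1 : q <= 1) (richCC : rich l CC).

(* State of a k-set: None is an edge of the uncolored model, Some None a
   non-edge, Some (Some a) an edge of color a of the colored model. *)
Local Notation site := (option (option 'I_c)).
Local Notation config := {ffun {set 'I_n} -> site}.

Definition site_weight (colored : bool) (x : site) : R :=
  match x with
  | None => if colored then 0 else p
  | Some None => if colored then 1 - q else 1 - p
  | Some (Some _) => if colored then q / c%:R else 0
  end.

Definition hybrid_weight (S : {set {set 'I_n}}) (g : config) : R :=
  \prod_(e in ksets n k) site_weight (e \in S) (g e).

Definition covers (g : config) (f : colhyp n c) : bool :=
  [forall e, (f e != None) ==> (g e == None) || (g e == Some (f e))].

(* Vertex sets outside ksets n k carry no weight; pinning their state makes
   the hybrid sum count each hypergraph once. *)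
Definition absent_off_ksets (g : config) : bool :=
  [forall e, (e \notin ksets n k) ==> (g e == Some None)].

Definition good (g : config) : bool :=
  absent_off_ksets g && [exists f in CC, covers g f].

Definition hybrid_prob (S : {set {set 'I_n}}) : R :=
  \sum_(g | good g) hybrid_weight S g.

Definition set_site (g : config) (e0 : {set 'I_n}) (x : site) : config :=
  [ffun e => if e == e0 then x else g e].

Lemma q_div_c : q / c%:R = p / l%:R.
Proof.
have cn0 : c%:R != 0 :> R by rewrite pnatr_eq0 -lt0n.
have ln0 : l%:R != 0 :> R by rewrite pnatr_eq0 -lt0n.
by rewrite /q; field; rewrite cn0 ln0.
Qed.

Lemma site_weight_ge0 b x : 0 <= site_weight b x.
Proof.
have q_ge0 : 0 <= q by rewrite divr_ge0 ?mulr_ge0.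
case: x => [[a|]|]; case: b; rewrite /= ?subr_ge0 //.
by rewrite q_div_c divr_ge0.
Qed.

Lemma sum_site_weight b : \sum_x site_weight b x = 1.
Proof.
have cn0 : c%:R != 0 :> R by rewrite pnatr_eq0 -lt0n.
rewrite !sumr_option sumr_const card_ord; case: b => /=.
  by rewrite -[_ *+ c]mulr_natr divfK //; lra.
by rewrite mul0rn; lra.
Qed.

Lemma site_weight_ineq (G : pred site) :
  (forall x, G (Some None) -> G x) ->
  (G None -> ~~ G (Some None) -> (l <= #|[set a | G (Some (Some a))]|)%N) ->
  \sum_(x | G x) site_weight false x <= \sum_(x | G x) site_weight true x.
Proof.
move=> absentG richG; have [GA|nGA] := boolP (G (Some None)).
  have allG : G =1 predT by move=> x; exact: absentG.
  by rewrite !(eq_bigl _ _ allG) !sum_site_weight.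
rewrite [X in X <= _]big_mkcond [X in _ <= X]big_mkcond !sumr_option /=.
rewrite (negbTE nGA) !add0r if_same add0r big1 ?addr0; last by move=> a _; case: ifP.
rewrite -big_mkcond /= sumr_const q_div_c.
have [GU|_] := boolP (G None); last by rewrite mulrn_wge0 // divr_ge0.
have ln0 : l%:R != 0 :> R by rewrite pnatr_eq0 -lt0n.
apply: le_trans (_ : p / l%:R *+ l <= _).
  by rewrite -mulr_natr divfK.
rewrite -[_ *+ l]mulr_natr -[_ *+ #|_|]mulr_natr ler_wpM2l ?divr_ge0 // ler_nat.
rewrite (leq_trans (richG GU nGA)) // subset_leq_card //.
by apply/subsetP => a; rewrite inE.
Qed.

Lemma sum_set_site e0 (P : pred config) (F : config -> R) :
  \sum_(g | P g) F g =
  \sum_(g : config | g e0 == Some None)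
     \sum_(x | P (set_site g e0 x)) F (set_site g e0 x).
Proof.
rewrite big_mkcond (partition_big (fun g : config => g e0) predT) //=.
under [RHS]eq_bigr do rewrite big_mkcond.
rewrite [RHS]exchange_big /=; apply: eq_bigr => x _.
rewrite (reindex_onto (fun g => set_site g e0 x) (fun g => set_site g e0 (Some None))) /=.
  apply: eq_bigl => g; rewrite ffunE !eqxx /=.
  apply/eqP/eqP => [<-|ge0]; first by rewrite ffunE eqxx.
  by apply/ffunP => e; rewrite !ffunE; case: (e =P e0) => // ->.
by move=> g /eqP ge0; apply/ffunP => e; rewrite !ffunE; case: (e =P e0) => // ->.
Qed.

Lemma hybrid_weight_set_site S e0 g x : e0 \in ksets n k ->
  hybrid_weight S (set_site g e0 x) =
  site_weight (e0 \in S) x *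
  \prod_(e in ksets n k | e != e0) site_weight (e \in S) (g e).
Proof.
move=> ke0; rewrite /hybrid_weight (bigD1 e0) //= ffunE eqxx; congr (_ * _).
by apply: eq_bigr => e /andP[_ /negbTE ne]; rewrite ffunE ne.
Qed.

Lemma absent_off_ksets_set_site g e0 x x' : e0 \in ksets n k ->
  absent_off_ksets (set_site g e0 x) = absent_off_ksets (set_site g e0 x').
Proof.
move=> ke0; apply: eq_forallb => e; rewrite !ffunE.
by case: (e =P e0) => // ->; rewrite ke0.
Qed.

Lemma good_set_site g e0 x y f : e0 \in ksets n k ->
  absent_off_ksets (set_site g e0 x) -> f \in CC -> covers (set_site g e0 y) f ->
  good (set_site g e0 y).
Proof.
move=> ke0 absg fC covf; rewrite /good (absent_off_ksets_set_site _ _ x ke0) absg.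
by apply/existsP; exists f; rewrite fC.
Qed.

Lemma good_set_site_absent g e0 x : e0 \in ksets n k ->
  good (set_site g e0 (Some None)) -> good (set_site g e0 x).
Proof.
move=> ke0 /andP[absg /existsP[f /andP[fC /forallP covf]]].
apply: (good_set_site ke0 absg fC); apply/forallP => e.
by move: (covf e); rewrite !ffunE; case: (e =P e0) => // ->; case: (f e0).
Qed.

Lemma good_set_site_rich g e0 : e0 \in ksets n k ->
  good (set_site g e0 None) -> ~~ good (set_site g e0 (Some None)) ->
  (l <= #|[set a | good (set_site g e0 (Some (Some a)))]|)%N.
Proof.
move=> ke0 /andP[absg /existsP[f /andP[fC /forallP covf]]] not_absent.
have fe0 : f e0 != None.
  apply: contra not_absent => /eqP fe0; apply: (good_set_site ke0 absg fC).
  apply/forallP => e; move: (covf e); rewrite !ffunE.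
  by case: (e =P e0) => // ->; rewrite fe0.
apply: leq_trans (richCC fC fe0) _; apply: subset_leq_card.
apply/subsetP => a; rewrite !inE => recolorC.
apply: (good_set_site ke0 absg recolorC); apply/forallP => e.
move: (covf e); rewrite !ffunE.
by case: (e =P e0) => [->|_] //= _; rewrite eqxx orbT.
Qed.

Lemma hybrid_prob_setU1 (S : {set {set 'I_n}}) e0 :
  e0 \in ksets n k -> e0 \notin S -> hybrid_prob S <= hybrid_prob (e0 |: S).
Proof.
move=> ke0 e0S; rewrite /hybrid_prob (sum_set_site e0) [X in _ <= X](sum_set_site e0).
apply: ler_sum => g _.
set rest := \prod_(e in ksets n k | e != e0) site_weight (e \in S) (g e).
have restU1 : \prod_(e in ksets n k | e != e0) site_weight (e \in e0 |: S) (g e) = rest.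
  by apply: eq_bigr => e /andP[_ /negbTE ne]; rewrite in_setU1 ne.
under eq_bigr do rewrite hybrid_weight_set_site // (negbTE e0S) -/rest.
under [X in _ <= X]eq_bigr do rewrite hybrid_weight_set_site // setU11 restU1.
rewrite -!mulr_suml ler_wpM2r //.
  by apply: prodr_ge0 => e _; exact: site_weight_ge0.
apply: site_weight_ineq => [x|]; first exact: good_set_site_absent.
exact: good_set_site_rich.
Qed.

Lemma hybrid_prob_set0_le (S : {set {set 'I_n}}) :
  S \subset ksets n k -> hybrid_prob set0 <= hybrid_prob S.
Proof.
move: {2}#|S| (erefl #|S|) => m; elim: m S => [|m IH] S cardS sSk.
  by move/eqP: cardS; rewrite cards_eq0 => /eqP ->.
have /set0Pn[e0 e0S] : S != set0 by rewrite -card_gt0 cardS.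
rewrite -(setD1K e0S); apply: le_trans (hybrid_prob_setU1 _ _) => //.
- apply: IH; last exact: subset_trans (subsetDl _ _) sSk.
  by move: cardS; rewrite (cardsD1 e0 S) e0S => -[].
- exact: subsetP sSk e0 e0S.
- by rewrite setD11.
Qed.

Lemma hybrid_prob_restrict (P : pred config) S :
  (forall g, good g -> ~~ P g -> hybrid_weight S g = 0) ->
  hybrid_prob S = \sum_(g | good g && P g) hybrid_weight S g.
Proof.
move=> weight0; rewrite /hybrid_prob (bigID P) /= [X in _ + X]big1 ?addr0 //.
by move=> g /andP[]; exact: weight0.
Qed.

Lemma good_in_ksets g e : good g -> g e != Some None -> e \in ksets n k.
Proof.
case/andP => /forallP /(_ e); case: (e \in ksets n k) => //= /eqP ->.
by rewrite eqxx.
Qed.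

Definition uncolored_config (E : {set {set 'I_n}}) : config :=
  [ffun e => if e \in E then None else Some None].

Definition is_uncolored (g : config) : bool :=
  [forall e, (g e == None) || (g e == Some None)].

Definition present_edges (g : config) : {set {set 'I_n}} := [set e | g e == None].

Lemma is_uncolored_config E : is_uncolored (uncolored_config E).
Proof. by apply/forallP => e; rewrite ffunE; case: (e \in E). Qed.

Lemma uncolored_configK : cancel uncolored_config present_edges.
Proof. by move=> E; apply/setP => e; rewrite inE ffunE; case: (e \in E). Qed.

Lemma covers_uncolored_config E f :
  covers (uncolored_config E) f = (forget f \subset E).
Proof.
apply/forallP/subsetP => [covf e|sfE e].
  rewrite inE => fe; move: (covf e); rewrite fe ffunE.
  by case: (e \in E); case: (f e) fe.
by apply/implyP => fe; rewrite ffunE sfE ?inE.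
Qed.

Lemma good_uncolored_config E :
  good (uncolored_config E) = is_khyper k E && [exists E' in uncolored CC, E' \subset E].
Proof.
congr (_ && _).
  apply/forallP/subsetP => [absE e eE|sEk e].
    by apply/negPn/negP => /negbTE ek; move: (absE e); rewrite ek ffunE eE.
  by rewrite ffunE; case: (boolP (e \in E)) => [/sEk ->|]; rewrite ?eqxx ?implybT.
apply/existsP/existsP => [[f /andP[fC]]|[_ /andP[/imsetP[f fC ->]]]].
  by rewrite covers_uncolored_config => sfE; exists (forget f); rewrite imset_f.
by rewrite -covers_uncolored_config => covf; exists f; rewrite fC.
Qed.

Lemma hybrid_weight_uncolored_config E : is_khyper k E ->
  hybrid_weight set0 (uncolored_config E) =
  p ^+ #|E| * (1 - p) ^+ (#|ksets n k| - #|E|).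
Proof.
move=> sEk; rewrite /hybrid_weight (bigID (mem E)) /=.
rewrite (eq_bigl (fun e => e \in E)) => [|e]; last by rewrite andb_idl //; exact: subsetP.
rewrite [X in _ * X](eq_bigl (fun e => e \in ksets n k :\: E)) => [|e]; last first.
  by rewrite !inE andbC.
rewrite (eq_bigr (fun=> p)) => [|e eE]; last by rewrite in_set0 ffunE eE.
rewrite [X in _ * X](eq_bigr (fun=> 1 - p)) => [|e]; last first.
  by rewrite inE in_set0 ffunE => /andP[/negbTE ->].
by rewrite !prodr_const cardsD (setIidPr sEk).
Qed.

Lemma hybrid_prob_set0 :
  hybrid_prob set0 = prob_unc k p (fun H => [exists E in uncolored CC, E \subset H]).
Proof.
rewrite (@hybrid_prob_restrict is_uncolored) => [|g goodg]; last first.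
  case/forallPn => e; rewrite negb_or => /andP[ge ge'].
  rewrite /hybrid_weight (bigD1 e) ?(good_in_ksets goodg) //= in_set0.
  by move: ge ge'; case: (g e) => [[a|]|] //= _ _; rewrite mul0r.
rewrite (reindex_onto uncolored_config present_edges) => [|g]; last first.
  case/andP => _ /forallP uncg; apply/ffunP => e; rewrite !ffunE inE.
  by move: (uncg e); case: (g e) => [[a|]|].
apply: eq_big => E; rewrite good_uncolored_config.
  by rewrite is_uncolored_config uncolored_configK eqxx !andbT.
by case/andP => /andP[/andP[sEk _] _] _; exact: hybrid_weight_uncolored_config.
Qed.

Definition colored_config (F : colhyp n c) : config := [ffun e => Some (F e)].

Definition is_colored (g : config) : bool := [forall e, g e != None].

Definition config_colors (g : config) : colhyp n c := [ffun e => odflt None (g e)].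

Lemma is_colored_config F : is_colored (colored_config F).
Proof. by apply/forallP => e; rewrite ffunE. Qed.

Lemma colored_configK : cancel colored_config config_colors.
Proof. by move=> F; apply/ffunP => e; rewrite !ffunE. Qed.

Lemma good_colored_config F :
  good (colored_config F) = is_kcol k F && [exists f in CC, contains_col F f].
Proof.
congr (_ && _).
  apply: eq_forallb => e; rewrite ffunE.
  by case: (e \in ksets n k); case: (F e) => //=; rewrite ?implybT.
by apply: eq_existsb => f; congr (_ && _); apply: eq_forallb => e; rewrite ffunE.
Qed.

Lemma hybrid_weight_colored_config F :
  hybrid_weight (ksets n k) (colored_config F) =
  \prod_(e in ksets n k) (if F e is Some _ then q / c%:R else 1 - q).
Proof. by apply: eq_bigr => e ek; rewrite ek ffunE; case: (F e). Qed.

Lemma hybrid_prob_ksets :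
  hybrid_prob (ksets n k) = prob_col k q (fun F => [exists f in CC, contains_col F f]).
Proof.
rewrite (@hybrid_prob_restrict is_colored) => [|g goodg]; last first.
  case/forallPn => e; rewrite negbK => /eqP ge.
  have ek : e \in ksets n k by rewrite (good_in_ksets goodg) ?ge.
  by rewrite /hybrid_weight (bigD1 e) //= ek ge mul0r.
rewrite (reindex_onto colored_config config_colors) => [|g]; last first.
  case/andP => _ /forallP colg; apply/ffunP => e; rewrite !ffunE.
  by move: (colg e); case: (g e).
apply: eq_big => F; rewrite good_colored_config.
  by rewrite is_colored_config colored_configK eqxx !andbT.
by move=> _; exact: hybrid_weight_colored_config.
Qed.

Lemma prob_unc_le_prob_col :
  prob_unc k p (fun H => [exists E in uncolored CC, E \subset H])
  <= prob_col k q (fun F => [exists f in CC, contains_col F f]).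
Proof. by rewrite -hybrid_prob_set0 -hybrid_prob_ksets; exact: hybrid_prob_set0_le. Qed.

End HybridModel.

Theorem theorem2 (R : realFieldType) (n : nat) (p : R) (l c k : nat)
  (CC : {set colhyp n c}) :
  0 <= p -> p <= 1 ->
  (0 < l)%N -> (0 < c)%N ->
  c%:R * p / l%:R <= 1 ->
  (0 < k)%N ->
  (forall f, f \in CC -> is_kcol k f) ->
  rich l CC ->
  prob_unc k p (fun H => [exists E in uncolored CC, E \subset H])
  <= prob_col k (c%:R * p / l%:R)
       (fun F => [exists f in CC, contains_col F f]).
Proof.
move=> p_ge0 p_le1 l_gt0 c_gt0 q_le1 _ _ richCC.
exact: prob_unc_le_prob_col.
Qed.
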